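(* Let $G$ be a localic group and $X$ a set, and let $\widehat{\mu}:G\to Rel(X)$ be a morphism of localic monoids. Then there exists a unique action of $G$ on $X$, i.e. a morphism of localic groups $\widehat{\mu}:G\to Aut(X)$, whose composite with $Aut(X)\to Rel(X)$ is the given morphism; equivalently the corresponding locale map $Rel(X)\to\mathcal{O}(G)$ factors (uniquely) through $Rel(X)\to Aut(X)$ via a Hopf algebra morphism.
   Context: Localic groups/monoids are group/monoid objects in $Loc^{op}$, i.e. Hopf algebras/bialgebras in sup-lattices whose underlying algebra is a locale (comultiplication $w$, counit $e$, antipode $\iota$). For a set $X$, $Rel(X)$ is the free locale on $X\times X$ (generators $\langle x|y\rangle$), a localic monoid with $w\langle x|y\rangle=\bigvee_z\langle x|z\rangle\otimes\langle z|y\rangle$ and $e\langle x|y\rangle=\delta_{x=y}$. $Aut(X)$ is the quotient of $Rel(X)$ forcing $X\times X\to Aut(X)$ to be an $\ell$-bijection ($\bigvee_y\langle x|y\rangle=1$, $\langle x|y_1\rangle\wedge\langle x|y_2\rangle=0$ for $y_1\ne y_2$, and the two symmetric conditions); it is a localic group with the same $w,e$ and antipode $\iota\langle x|y\rangle=\langle y|x\rangle$. An action of $G$ on $X$ is a localic group morphism $G\to Aut(X)$, i.e. a Hopf algebra morphism $Aut(X)\to\mathcal{O}(G)$. *)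

(* Frames (= locales) presented as complete preorders whose
   quotient by mutual inequality is a frame; equality of frame elements is
   [feq] (mutual inequality). *)
From Stdlib Require Import List.
Set Implicit Arguments.
Unset Strict Implicit.

Record frame := Frame {
  car :> Type;
  le : car -> car -> Prop;
  top : car;
  meet : car -> car -> car;
  join : (car -> Prop) -> car;
  le_refl : forall a, le a a;
  le_trans : forall a b c, le a b -> le b c -> le a c;
  le_top : forall a, le a top;
  meet_l : forall a b, le (meet a b) a;
  meet_r : forall a b, le (meet a b) b;
  meet_glb : forall a b c, le c a -> le c b -> le c (meet a b);
  join_ub : forall (S : car -> Prop) a, S a -> le a (join S);
  join_lub : forall (S : car -> Prop) c, (forall a, S a -> le a c) -> le (join S) c;
  distr : forall a (S : car -> Prop),
      le (meet a (join S)) (join (fun y => exists s, S s /\ y = meet a s))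
}.
Arguments le {f} _ _.
Arguments top {f}.
Arguments meet {f} _ _.
Arguments join {f} _.

Definition feq (L : frame) (a b : L) := le a b /\ le b a.
Definition bot (L : frame) : L := join (fun _ => False).
Definition image (L M : frame) (f : L -> M) (S : L -> Prop) : M -> Prop :=
  fun y => exists x, S x /\ y = f x.

(* frame homomorphism = (inverse image of) a locale map *)
Definition is_frame_hom (L M : frame) (f : L -> M) : Prop :=
  (forall a b, le a b -> le (f a) (f b)) /\
  feq (f top) top /\
  (forall a b, feq (f (meet a b)) (meet (f a) (f b))) /\
  (forall S, feq (f (join S)) (join (image f S))).

Section FrameLemmas.
Variable L : frame.
Lemma meet_comm (a b : L) : le (meet a b) (meet b a).
Proof. apply meet_glb; [apply meet_r | apply meet_l]. Qed.
Lemma meet_mono (a a' b b' : L) : le a a' -> le b b' -> le (meet a b) (meet a' b').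
Proof.
  intros Ha Hb; apply meet_glb;
  [apply le_trans with a; [apply meet_l|exact Ha]
  |apply le_trans with b; [apply meet_r|exact Hb]].
Qed.
Lemma meet_assoc1 (a b c : L) : le (meet (meet a b) c) (meet a (meet b c)).
Proof.
  apply meet_glb. apply le_trans with (meet a b); [apply meet_l|apply meet_l].
  apply meet_mono; [apply meet_r|apply le_refl].
Qed.
Lemma meet_assoc2 (a b c : L) : le (meet a (meet b c)) (meet (meet a b) c).
Proof.
  apply meet_glb. apply meet_mono; [apply le_refl|apply meet_l].
  apply le_trans with (meet b c); [apply meet_r|apply meet_r].
Qed.
Definition heyt (b u : L) : L := join (fun y => le (meet y b) u).
Lemma heyt_intro (y b u : L) : le (meet y b) u -> le y (heyt b u).
Proof. intro H; apply join_ub; exact H. Qed.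
Lemma heyt_elim (y b u : L) : le y (heyt b u) -> le (meet y b) u.
Proof.
  intro H. apply le_trans with (meet b (heyt b u)).
  apply le_trans with (meet b y); [apply meet_comm|apply meet_mono; [apply le_refl|exact H]].
  eapply le_trans; [apply distr|]. apply join_lub. intros z [s [Hs ->]].
  eapply le_trans; [apply meet_comm|exact Hs].
Qed.
End FrameLemmas.

Definition Om : frame.
Proof.
  refine (@Frame Prop (fun p q => p -> q) True and
                 (fun S => exists p, S p /\ p) _ _ _ _ _ _ _ _ _).
  - auto.
  - auto.
  - auto.
  - intros a b [H _]; exact H.
  - intros a b [_ H]; exact H.
  - intros a b c H1 H2 H; split; auto.
  - intros S a Sa Ha; exists a; auto.
  - intros S c H [p [Sp Hp]]; exact (H p Sp Hp).
  - intros a S [Ha [p [Sp Hp]]]. exists (a /\ p). split; [exists p; auto|auto].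
Defined.

(* ---------- binary coproduct of locales: tensor product of frames,
   constructed as the frame of C-ideals of L x M ---------- *)
Section Tensor.
Variables L M : frame.
Definition cideal (D : L * M -> Prop) : Prop :=
  (forall a b a' b', D (a, b) -> le a' a -> le b' b -> D (a', b')) /\
  (forall (S : L -> Prop) b, (forall a, S a -> D (a, b)) -> D (join S, b)) /\
  (forall a (S : M -> Prop), (forall b, S b -> D (a, b)) -> D (a, join S)).
Definition gen (R : L * M -> Prop) : L * M -> Prop :=
  fun p => forall E, cideal E -> (forall q, R q -> E q) -> E p.
Lemma gen_cideal R : cideal (gen R).
Proof.
  split; [|split].
  - intros a b a' b' H ha hb E cE HR. destruct cE as [d [jl jr]].
    apply (d a b); [apply H; [exact (conj d (conj jl jr))|exact HR]|exact ha|exact hb].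
  - intros S b H E cE HR. apply (proj1 (proj2 cE)). intros a Sa. apply H; auto.
  - intros a S H E cE HR. apply (proj2 (proj2 cE)). intros b Sb. apply H; auto.
Qed.
Definition tcar := {D : L * M -> Prop | cideal D}.
Definition tle (D E : tcar) := forall p, proj1_sig D p -> proj1_sig E p.
Definition ttop : tcar.
Proof. exists (fun _ => True). split; [|split]; auto. Defined.
Definition tmeet (D E : tcar) : tcar.
Proof.
  exists (fun p => proj1_sig D p /\ proj1_sig E p).
  destruct D as [D [d1 [d2 d3]]], E as [E [e1 [e2 e3]]]; simpl.
  split; [|split].
  - intros a b a' b' [H1 H2] ha hb; split; [eapply d1|eapply e1]; eauto.
  - intros S b H; split; [apply d2|apply e2]; intros a Sa; apply (H a Sa).
  - intros a S H; split; [apply d3|apply e3]; intros b Sb; apply (H b Sb).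
Defined.
Definition tgen (R : L * M -> Prop) : tcar := exist _ (gen R) (gen_cideal R).
Definition tjoin (S : tcar -> Prop) : tcar :=
  tgen (fun p => exists D, S D /\ proj1_sig D p).

Lemma tdistr (A : tcar) (S : tcar -> Prop) :
  tle (tmeet A (tjoin S)) (tjoin (fun y => exists s, S s /\ y = tmeet A s)).
Proof.
  set (J := tjoin (fun y => exists s, S s /\ y = tmeet A s)).
  destruct (proj2_sig J) as [j1 [j2 j3]].
  destruct (proj2_sig A) as [a1 [a2 a3]].
  set (E := fun p : L * M => forall a' b', le a' (fst p) -> le b' (snd p) ->
                 proj1_sig A (a', b') -> proj1_sig J (a', b')).
  assert (cE : cideal E).
  { split; [|split].
    - intros a b a0 b0 H ha hb a' b' h1 h2 HA. apply H; simpl in *;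
        [eapply le_trans; eauto|eapply le_trans; eauto|exact HA].
    - intros T b H a' b' h1 h2 HA. simpl in *.
      apply j1 with (join (fun y => exists s, T s /\ y = meet a' s)) b'.
      + apply j2. intros y [s [Ts ->]]. apply (H s Ts); simpl.
        apply meet_r. exact h2. apply a1 with a' b'; [exact HA|apply meet_l|apply le_refl].
      + eapply le_trans; [|apply distr]. apply meet_glb; [apply le_refl|exact h1].
      + apply le_refl.
    - intros a T H a' b' h1 h2 HA. simpl in *.
      apply j1 with a' (join (fun y => exists s, T s /\ y = meet b' s)).
      + apply j3. intros y [s [Ts ->]]. apply (H s Ts); simpl.
        exact h1. apply meet_r. apply a1 with a' b'; [exact HA|apply le_refl|apply meet_l].
      + apply le_refl.
      + eapply le_trans; [|apply distr]. apply meet_glb; [apply le_refl|exact h2]. }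
  intros [a b] [HA HJ]. simpl in HJ.
  refine (HJ E cE _ a b (le_refl _) (le_refl _) HA).
  intros [x y] [D [SD HD]] a' b' h1 h2 HA'. simpl in *.
  intros F cF HR. apply HR. exists (tmeet A D). split.
  - exists D; auto.
  - simpl. split; [exact HA'|]. destruct (proj2_sig D) as [d1 _].
    eapply d1; eauto.
Qed.

Definition tensor : frame.
Proof.
  refine (@Frame tcar tle ttop tmeet tjoin _ _ _ _ _ _ _ _ tdistr).
  - intros a p H; exact H.
  - intros a b c H1 H2 p H; auto.
  - intros a p _; exact I.
  - intros a b p [H _]; exact H.
  - intros a b p [_ H]; exact H.
  - intros a b c H1 H2 p H; split; auto.
  - intros S a Sa p Hp E cE HR. apply HR. exists a; auto.
  - intros S c H p Hp. apply Hp; [exact (proj2_sig c)|].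
    intros q [D [SD Dq]]. exact (H D SD q Dq).
Defined.

Definition pt (a : L) (b : M) : tensor := tgen (fun p => p = (a, b)).
End Tensor.

Definition tmap (L M L' M' : frame) (f : L -> L') (g : M -> M')
  (D : tensor L M) : tensor L' M' :=
  join (fun y => exists a b, proj1_sig D (a, b) /\ y = pt (f a) (g b)).

Definition assoc (L M N : frame) (D : tensor (tensor L M) N) : tensor L (tensor M N) :=
  join (fun y => exists P c a b, proj1_sig D (P, c) /\ proj1_sig P (a, b) /\
                                 y = pt a (pt b c)).

Definition lunit (L : frame) (D : tensor Om L) : L :=
  join (fun y => exists p : Prop, proj1_sig D (p, y) /\ p).
Definition runit (L : frame) (D : tensor L Om) : L :=
  join (fun y => exists p : Prop, proj1_sig D (y, p) /\ p).
Definition mult (L : frame) (D : tensor L L) : L :=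
  join (fun y => exists a b, proj1_sig D (a, b) /\ y = meet a b).
Definition unitmap (L : frame) (p : Om) : L := join (fun y => p /\ y = top).

(* localic group = Hopf algebra in sup-lattices whose underlying algebra is
   a frame: comultiplication w, counit e, antipode i, all frame maps *)
Record localic_group (L : frame) (w : L -> tensor L L) (e : L -> Om) (i : L -> L)
  : Prop := {
  lg_w_hom : is_frame_hom w;
  lg_e_hom : is_frame_hom e;
  lg_i_hom : is_frame_hom i;
  lg_coassoc : forall a,
      feq (assoc (tmap w (fun x => x) (w a))) (tmap (fun x => x) w (w a));
  lg_counit_l : forall a, feq (lunit (tmap e (fun x => x) (w a))) a;
  lg_counit_r : forall a, feq (runit (tmap (fun x => x) e (w a))) a;
  lg_antipode_l : forall a, feq (mult (tmap i (fun x => x) (w a))) (unitmap L (e a));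
  lg_antipode_r : forall a, feq (mult (tmap (fun x => x) i (w a))) (unitmap L (e a))
}.

(* morphism of localic monoids H -> G, given on frames as f : O(H) -> O(G):
   a frame map compatible with comultiplications and counits *)
Definition hopf_mor (H G : frame) (wH : H -> tensor H H) (eH : H -> Om)
  (wG : G -> tensor G G) (eG : G -> Om) (f : H -> G) : Prop :=
  is_frame_hom f /\
  (forall a, feq (wG (f a)) (tmap f f (wH a))) /\
  (forall a, feq (eG (f a)) (eH a)).

(* ---------- free frame on a set S: up-closed families of finite subsets
   (lists), U standing for \/_{F in U} /\_{s in F} <s> ---------- *)
Section Free.
Variable S : Type.
Definition upset (U : list S -> Prop) :=
  forall F G, U F -> (forall s, In s F -> In s G) -> U G.
Definition fcar := {U | upset U}.
Definition fle (U V : fcar) := forall F, proj1_sig U F -> proj1_sig V F.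
Definition ftop : fcar.
Proof. exists (fun _ => True). intros F G _ _; exact I. Defined.
Definition fmeet (U V : fcar) : fcar.
Proof.
  exists (fun F => proj1_sig U F /\ proj1_sig V F).
  intros F G [H1 H2] H; split; [eapply (proj2_sig U)|eapply (proj2_sig V)]; eauto.
Defined.
Definition fjoin (T : fcar -> Prop) : fcar.
Proof.
  exists (fun F => exists U, T U /\ proj1_sig U F).
  intros F G [U [TU HU]] H. exists U; split; [exact TU|eapply (proj2_sig U); eauto].
Defined.
Definition free : frame.
Proof.
  refine (@Frame fcar fle ftop fmeet fjoin _ _ _ _ _ _ _ _ _).
  - intros a F H; exact H.
  - intros a b c H1 H2 F H; auto.
  - intros a F _; exact I.
  - intros a b F [H _]; exact H.
  - intros a b F [_ H]; exact H.
  - intros a b c H1 H2 F H; split; auto.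
  - intros T a Ta F H. exists a; auto.
  - intros T c H F [U [TU HU]]. exact (H U TU F HU).
  - intros a T F [Ha [U [TU HU]]]. exists (fmeet a U). split.
    + exists U; auto.
    + simpl; auto.
Defined.
Definition gener (s : S) : free.
Proof. exists (fun F => In s F). intros F G H1 H2; auto. Defined.
Definition ext (L : frame) (g : S -> L) (U : free) : L :=
  join (fun y => exists F, proj1_sig U F /\
                  y = fold_right (fun s acc => meet (g s) acc) top F).
End Free.

Definition Rel (X : Type) : frame := free (X * X).
Definition rgen (X : Type) (x y : X) : Rel X := gener (x, y).
Definition wRel (X : Type) : Rel X -> tensor (Rel X) (Rel X) :=
  ext (fun p => join (fun D => exists z, D = pt (rgen (fst p) z) (rgen z (snd p)))).
Definition eRel (X : Type) : Rel X -> Om := @ext (X * X) Om (fun p : X * X => (fst p = snd p : car Om)).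

(* ---------- quotient frame L / R (R : pairs to be identified), built on
   the same carrier with the order  x <= y  iff  every R-saturated element
   above y is above x ---------- *)
Section Quot.
Variables (L : frame) (R : L -> L -> Prop).
Definition sat (u : L) :=
  forall a b c, R a b -> (le (meet a c) u <-> le (meet b c) u).
Definition qle (x y : L) := forall u, sat u -> le y u -> le x u.
Lemma sat_heyt b u : sat u -> sat (heyt b u).
Proof.
  intros su a0 b0 c HR; split; intro H; apply heyt_intro; apply heyt_elim in H.
  - eapply le_trans; [apply meet_assoc1|]. apply (su a0 b0 _ HR).
    eapply le_trans; [apply meet_assoc2|exact H].
  - eapply le_trans; [apply meet_assoc1|]. apply (su a0 b0 _ HR).
    eapply le_trans; [apply meet_assoc2|exact H].
Qed.
Definition quot : frame.
Proof.
  refine (@Frame (car L) qle top meet join _ _ _ _ _ _ _ _ _).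
  - intros a u _ H; exact H.
  - intros a b c H1 H2 u su H; auto.
  - intros a u su H; eapply le_trans; [apply le_top|exact H].
  - intros a b u su H; eapply le_trans; [apply meet_l|exact H].
  - intros a b u su H; eapply le_trans; [apply meet_r|exact H].
  - intros a b c H1 H2 u su H.
    assert (Hc : le (meet c b) u).
    { apply heyt_elim. apply H1; [apply sat_heyt; exact su|].
      apply heyt_intro; exact H. }
    assert (Hc2 : le c (heyt c u)).
    { apply H2; [apply sat_heyt; exact su|].
      apply heyt_intro. eapply le_trans; [apply meet_comm|exact Hc]. }
    apply heyt_elim in Hc2. eapply le_trans; [|exact Hc2].
    apply meet_glb; apply le_refl.
  - intros S a Sa u su H; eapply le_trans; [apply join_ub; exact Sa|exact H].
  - intros S c H u su Hc. apply join_lub. intros a Sa; exact (H a Sa u su Hc).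
  - intros a S u su H. eapply le_trans; [apply distr|exact H].
Defined.
End Quot.

(* ---------- Aut(X): quotient of Rel(X) forcing X x X -> Aut(X) to be an
   l-bijection ---------- *)
Definition autrel (X : Type) (a b : Rel X) : Prop :=
  (exists x, a = join (fun g => exists y, g = rgen x y) /\ b = top) \/
  (exists x y1 y2, y1 <> y2 /\ a = meet (rgen x y1) (rgen x y2) /\ b = bot (Rel X)) \/
  (exists y, a = join (fun g => exists x, g = rgen x y) /\ b = top) \/
  (exists x1 x2 y, x1 <> x2 /\ a = meet (rgen x1 y) (rgen x2 y) /\ b = bot (Rel X)).
Definition Aut (X : Type) : frame := quot (@autrel X).
Definition qAut (X : Type) (U : Rel X) : Aut X := U.
Definition wAut (X : Type) (U : Aut X) : tensor (Aut X) (Aut X) :=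
  tmap (qAut (X:=X)) (qAut (X:=X)) (wRel U).
Definition eAut (X : Type) (U : Aut X) : Om := eRel U.

(* Write g_xy for the image under mu of the generator <x|y>.  Since mu preserves
   comultiplication and counit, the antipode axioms of G evaluated at <x|y> read
   \/_z i(g_xz) /\ g_zy = delta_{x=y} = \/_z g_xz /\ i(g_zy).  So for each x the
   elements i(g_xz) /\ g_zx cover O(G) while the cross terms vanish, which gives
   g_xy <= i(g_yx); with this the vanishing cross terms say that distinct entries
   of a row or of a column of g are disjoint, and the covers say that every row
   and column has join 1.  Thus mu respects the relations defining Aut(X) and
   factors through the quotient, which is the identity on carriers; comultiplication
   and counit of Aut(X) are induced from Rel(X), so the factorization is a Hopf
   morphism, and it is unique because the quotient map is surjective. *)
From Stdlib Require Import List Classical.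
Set Implicit Arguments.
Unset Strict Implicit.

Section FrameFacts.
Variable L : frame.

Lemma bot_le (a : L) : le (bot L) a.
Proof. apply join_lub. intros _ []. Qed.

Lemma le_of_cover (Z : Type) (c : Z -> L) (z0 : Z) (a b : L) :
  le top (join (fun t => exists z, t = c z)) ->
  (forall z, z <> z0 -> le (meet a (c z)) (bot L)) ->
  le (meet a (c z0)) b -> le a b.
Proof.
  intros Hcover Hoff Hon.
  apply le_trans with (meet a (join (fun t => exists z, t = c z))).
  { apply meet_glb; [apply le_refl | apply le_trans with top; [apply le_top | exact Hcover]]. }
  eapply le_trans; [apply distr |]. apply join_lub. intros t [s [[z ->] ->]].
  destruct (classic (z = z0)) as [-> | Hz]; [exact Hon |].
  eapply le_trans; [exact (Hoff z Hz) | apply bot_le].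
Qed.
End FrameFacts.

Section FrameHom.
Variables (L M : frame) (f : L -> M).
Hypothesis Hf : is_frame_hom f.

Lemma hom_mono a b : le a b -> le (f a) (f b).
Proof. apply Hf. Qed.

Lemma hom_meet a b : feq (f (meet a b)) (meet (f a) (f b)).
Proof. apply Hf. Qed.

Lemma hom_join S : feq (f (join S)) (join (image f S)).
Proof. apply Hf. Qed.

Lemma hom_bot_le m : le (f (bot L)) m.
Proof.
  eapply le_trans; [apply (hom_join _) |]. apply join_lub. intros t [r [[] _]].
Qed.

Definition radj (m : M) : L := join (fun u => le (f u) m).

Lemma radj_spec z m : le z (radj m) <-> le (f z) m.
Proof.
  split; intro H.
  - eapply le_trans; [apply hom_mono; exact H |].
    eapply le_trans; [apply (hom_join _) |].
    apply join_lub. intros t [u [Hu ->]]. exact Hu.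
  - apply join_ub. exact H.
Qed.
End FrameHom.

Definition sup_map (L M : frame) (f : L -> M) : Prop :=
  (forall a b, le a b -> le (f a) (f b)) /\
  (forall S, le (f (join S)) (join (image f S))).

Lemma hom_sup_map (L M : frame) (f : L -> M) : is_frame_hom f -> sup_map f.
Proof. intro Hf. split; [exact (hom_mono Hf) | intro S; apply (hom_join Hf)]. Qed.

Lemma id_sup_map (L : frame) : sup_map (fun x : L => x).
Proof.
  split; [auto |]. intro S. apply join_lub. intros a Sa. apply join_ub. exists a; auto.
Qed.

Section PureTensor.
Variables L M : frame.

Lemma pt_mem (a : L) (b : M) : proj1_sig (pt a b) (a, b).
Proof. intros E _ HR. apply HR. reflexivity. Qed.

Lemma pt_le (a : L) (b : M) (T : tensor L M) : proj1_sig T (a, b) -> le (pt a b) T.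
Proof. intros H p Hp. apply Hp; [exact (proj2_sig T) | intros q ->; exact H]. Qed.
End PureTensor.

Section TensorMap.
Variables (L M L' M' : frame) (f : L -> L') (g : M -> M').

Lemma tmap_mem D a b : proj1_sig D (a, b) -> proj1_sig (tmap f g D) (f a, g b).
Proof.
  intro H. assert (Hpt : le (pt (f a) (g b)) (tmap f g D)).
  { apply join_ub. exists a, b; auto. }
  apply Hpt, pt_mem.
Qed.

Lemma tmap_le D T :
  (forall a b, proj1_sig D (a, b) -> proj1_sig T (f a, g b)) -> le (tmap f g D) T.
Proof. intro H. apply join_lub. intros y [a [b [Hab ->]]]. apply pt_le. auto. Qed.

Hypotheses (Hf : sup_map f) (Hg : sup_map g).

Definition tpre_p (T : tensor L' M') : L * M -> Prop :=
  fun p => proj1_sig T (f (fst p), g (snd p)).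

Lemma tpre_cideal T : cideal (tpre_p T).
Proof.
  destruct Hf as [f_mono f_join], Hg as [g_mono g_join].
  destruct (proj2_sig T) as [t_down [t_joinl t_joinr]]. unfold tpre_p; simpl.
  split; [| split].
  - intros a b a' b' H ha hb. eapply t_down; eauto.
  - intros S b H. eapply t_down; [| apply f_join | apply le_refl].
    apply t_joinl. intros a' [a [Sa ->]]. exact (H a Sa).
  - intros a S H. eapply t_down; [| apply le_refl | apply g_join].
    apply t_joinr. intros b' [b [Sb ->]]. exact (H b Sb).
Qed.

Definition tpre (T : tensor L' M') : tensor L M := exist _ (tpre_p T) (tpre_cideal T).

Lemma tmap_le_iff D T : le (tmap f g D) T <-> le D (tpre T).
Proof.
  split.
  - intros H p Hp. destruct p as [a b]. apply H. apply tmap_mem. exact Hp.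
  - intro H. apply tmap_le. intros a b Hab. exact (H _ Hab).
Qed.
End TensorMap.

Lemma tmap_comp (L M L' M' L'' M'' : frame) (h : L -> L') (k : M -> M')
  (f : L' -> L'') (g : M' -> M'') (D : tensor L M) :
  sup_map f -> sup_map g ->
  feq (tmap f g (tmap h k D)) (tmap (fun x => f (h x)) (fun y => g (k y)) D).
Proof.
  intros Hf Hg. split.
  - apply (tmap_le_iff Hf Hg). apply tmap_le. intros a b Hab.
    exact (tmap_mem (f := fun x => f (h x)) (g := fun y => g (k y)) Hab).
  - apply tmap_le. intros a b Hab. do 2 apply tmap_mem. exact Hab.
Qed.

Section Multiplication.
Variable L : frame.

Definition below_p (u : L) : L * L -> Prop := fun p => le (meet (fst p) (snd p)) u.

Lemma below_cideal (u : L) : cideal (below_p u).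
Proof.
  unfold below_p; split; [| split]; simpl.
  - intros a b a' b' H ha hb. eapply le_trans; [apply meet_mono; eauto | exact H].
  - intros S b H. eapply le_trans; [apply meet_comm |]. eapply le_trans; [apply distr |].
    apply join_lub. intros y [s [Ss ->]]. eapply le_trans; [apply meet_comm | auto].
  - intros a S H. eapply le_trans; [apply distr |].
    apply join_lub. intros y [s [Ss ->]]. auto.
Qed.

Definition below (u : L) : tensor L L := exist _ (below_p u) (below_cideal u).

Lemma mult_le (D : tensor L L) u : le D (below u) -> le (mult D) u.
Proof. intro HD. apply join_lub. intros y [a [b [H ->]]]. exact (HD _ H). Qed.

Lemma meet_le_mult (D : tensor L L) a b : proj1_sig D (a, b) -> le (meet a b) (mult D).
Proof. intro H. apply join_ub. exists a, b; auto. Qed.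
End Multiplication.

Section RelGenerators.
Variable X : Type.

Lemma wRel_gen_mem (x y z : X) : proj1_sig (wRel (rgen x y)) (rgen x z, rgen z y).
Proof.
  assert (Hpt : le (pt (rgen x z) (rgen z y)) (wRel (rgen x y))).
  { eapply le_trans;
      [| apply join_ub; exists ((x, y) :: nil); split; [left |]; reflexivity].
    cbn [fold_right fst snd]. apply meet_glb; [| apply le_top].
    apply join_ub. exists z. reflexivity. }
  apply Hpt, pt_mem.
Qed.

Lemma wRel_gen_le (x y : X) (T : tensor (Rel X) (Rel X)) :
  (forall z, proj1_sig T (rgen x z, rgen z y)) -> le (wRel (rgen x y)) T.
Proof.
  intro H. apply join_lub. intros t [F [HF ->]]. change (In (x, y) F) in HF.
  apply le_trans with (join (fun D => exists z, D = pt (rgen x z) (rgen z y))).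
  - induction F as [| s F IH]; [destruct HF |].
    destruct HF as [-> | HF]; [apply meet_l | eapply le_trans; [apply meet_r | auto]].
  - apply join_lub. intros D [z ->]. apply pt_le. exact (H z).
Qed.

Lemma eRel_gen_refl (x : X) : eRel (rgen x x).
Proof. exists ((x = x) /\ True). split; [exists ((x, x) :: nil); split; [left |] |]; auto. Qed.

Lemma eRel_gen_eq (x y : X) : eRel (rgen x y) -> x = y.
Proof.
  intros [p [[F [HF ->]] Hp]]. change (In (x, y) F) in HF.
  induction F as [| s F IH]; [destruct HF |].
  destruct Hp as [H1 H2]. destruct HF as [-> | HF]; [exact H1 | exact (IH HF H2)].
Qed.
End RelGenerators.

Section Antipode.
Variables (O : frame) (w : O -> tensor O O) (e : O -> Om) (X : Type) (mu : Rel X -> O).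
Hypothesis Hmu : hopf_mor (@wRel X) (@eRel X) w e mu.
Variables (f g : O -> O).
Hypothesis Hanti : forall a, feq (mult (tmap f g (w a))) (unitmap O (e a)).

Lemma antipode_cover (Hf : sup_map f) (Hg : sup_map g) (x : X) :
  le top (join (fun t => exists z, t = meet (f (mu (rgen x z))) (g (mu (rgen z x))))).
Proof.
  set (u := join _).
  destruct Hmu as [mu_hom [mu_w mu_e]].
  assert (Hw : le (w (mu (rgen x x))) (tpre Hf Hg (below u))).
  { eapply le_trans; [apply (mu_w (rgen x x)) |].
    apply (tmap_le_iff (hom_sup_map mu_hom) (hom_sup_map mu_hom)).
    apply wRel_gen_le. intro z. apply join_ub. exists z. reflexivity. }
  eapply le_trans; [| apply mult_le, (tmap_le_iff Hf Hg), Hw].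
  eapply le_trans; [| apply (Hanti _)].
  apply join_ub. split; [apply mu_e, eRel_gen_refl | reflexivity].
Qed.

Lemma antipode_disjoint (x y z : X) :
  x <> y -> le (meet (f (mu (rgen x z))) (g (mu (rgen z y)))) (bot O).
Proof.
  intro Hxy. destruct Hmu as [_ [mu_w mu_e]].
  eapply le_trans; [apply meet_le_mult, tmap_mem, (mu_w (rgen x y)), tmap_mem, wRel_gen_mem |].
  eapply le_trans; [apply (Hanti _) |].
  apply join_lub. intros t [He _]. exfalso. apply Hxy, eRel_gen_eq, mu_e, He.
Qed.
End Antipode.

Section LBijection.
Variables (O : frame) (w : O -> tensor O O) (e : O -> Om) (i : O -> O).
Variables (X : Type) (mu : Rel X -> O).
Hypotheses (HG : localic_group w e i) (Hmu : hopf_mor (@wRel X) (@eRel X) w e mu).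

Lemma left_cover x :
  le top (join (fun t => exists z, t = meet (i (mu (rgen x z))) (mu (rgen z x)))).
Proof.
  exact (antipode_cover Hmu (lg_antipode_l HG) (hom_sup_map (lg_i_hom HG)) (id_sup_map O) x).
Qed.

Lemma right_cover x :
  le top (join (fun t => exists z, t = meet (mu (rgen x z)) (i (mu (rgen z x))))).
Proof.
  exact (antipode_cover Hmu (lg_antipode_r HG) (id_sup_map O) (hom_sup_map (lg_i_hom HG)) x).
Qed.

Lemma left_disjoint x y z :
  x <> y -> le (meet (i (mu (rgen x z))) (mu (rgen z y))) (bot O).
Proof. exact (antipode_disjoint Hmu (lg_antipode_l HG) z). Qed.

Lemma right_disjoint x y z :
  x <> y -> le (meet (mu (rgen x z)) (i (mu (rgen z y)))) (bot O).
Proof. exact (antipode_disjoint Hmu (lg_antipode_r HG) z). Qed.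

Lemma gen_le_antipode x y : le (mu (rgen x y)) (i (mu (rgen y x))).
Proof.
  apply (le_of_cover (z0 := x) (left_cover y)).
  - intros z Hzx. eapply le_trans; [| apply (right_disjoint y (not_eq_sym Hzx))].
    apply meet_mono; [apply le_refl | apply meet_l].
  - eapply le_trans; [apply meet_r | apply meet_l].
Qed.

Lemma row_disjoint x y1 y2 :
  y1 <> y2 -> le (meet (mu (rgen x y1)) (mu (rgen x y2))) (bot O).
Proof.
  intro Hy. eapply le_trans; [| apply (left_disjoint x Hy)].
  apply meet_mono; [apply gen_le_antipode | apply le_refl].
Qed.

Lemma column_disjoint x1 x2 y :
  x1 <> x2 -> le (meet (mu (rgen x1 y)) (mu (rgen x2 y))) (bot O).
Proof.
  intro Hx. eapply le_trans; [apply meet_comm |].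
  eapply le_trans; [| apply (right_disjoint y (not_eq_sym Hx))].
  apply meet_mono; [apply le_refl | apply gen_le_antipode].
Qed.

Lemma row_cover x : le top (mu (join (fun u => exists y, u = rgen x y))).
Proof.
  eapply le_trans; [apply (right_cover x) |].
  eapply le_trans; [| apply (hom_join (proj1 Hmu))].
  apply join_lub. intros t [z ->]. eapply le_trans; [apply meet_l |].
  apply join_ub. exists (rgen x z). split; [exists z |]; reflexivity.
Qed.

Lemma column_cover y : le top (mu (join (fun u => exists x, u = rgen x y))).
Proof.
  eapply le_trans; [apply (left_cover y) |].
  eapply le_trans; [| apply (hom_join (proj1 Hmu))].
  apply join_lub. intros t [z ->]. eapply le_trans; [apply meet_r |].
  apply join_ub. exists (rgen z y). split; [exists z |]; reflexivity.
Qed.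

Lemma autrel_identified a b : autrel a b -> feq (mu a) (mu b).
Proof.
  pose proof (proj1 Hmu) as mu_hom.
  intros [[x [-> ->]] | [[x [y1 [y2 [Hy [-> ->]]]]] | [[y [-> ->]] | [x1 [x2 [y [Hx [-> ->]]]]]]]].
  - split; [apply (hom_mono mu_hom), le_top | eapply le_trans; [apply le_top | apply row_cover]].
  - split; [| apply (hom_bot_le mu_hom)].
    eapply le_trans; [apply (hom_meet mu_hom) |].
    eapply le_trans; [apply (row_disjoint x Hy) | apply bot_le].
  - split; [apply (hom_mono mu_hom), le_top | eapply le_trans; [apply le_top | apply column_cover]].
  - split; [| apply (hom_bot_le mu_hom)].
    eapply le_trans; [apply (hom_meet mu_hom) |].
    eapply le_trans; [apply (column_disjoint y Hx) | apply bot_le].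
Qed.
End LBijection.

Section QuotientLift.
Variables (L M : frame) (R : L -> L -> Prop) (f : L -> M).
Hypotheses (Hf : is_frame_hom f) (HR : forall a b, R a b -> feq (f a) (f b)).

(* Saturated elements are the opens of the quotient, so qle a b yields a <= radj f (f b). *)
Lemma radj_sat m : sat R (radj f m).
Proof.
  intros a b c Hab. rewrite !(radj_spec Hf).
  assert (meet_cong : forall a' b', le (f a') (f b') -> le (f (meet a' c)) (f (meet b' c))).
  { intros a' b' H. eapply le_trans; [apply (hom_meet Hf) |].
    eapply le_trans; [| apply (hom_meet Hf)]. apply meet_mono; [exact H | apply le_refl]. }
  destruct (HR Hab) as [Hab1 Hab2].
  split; intro H; eapply le_trans; eauto.
Qed.

Lemma quot_lift_hom : is_frame_hom (L := quot R) f.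
Proof.
  split; [| apply Hf].
  intros a b Hab. apply (radj_spec Hf).
  apply (Hab _ (radj_sat (f b))). apply (radj_spec Hf), le_refl.
Qed.
End QuotientLift.

Theorem mainTheorem10 (O : frame) (w : O -> tensor O O) (e : O -> Om) (i : O -> O)
  (X : Type) (mu : Rel X -> O) :
  localic_group w e i ->
  hopf_mor (@wRel X) (@eRel X) w e mu ->
  exists psi : Aut X -> O,
    (hopf_mor (@wAut X) (@eAut X) w e psi /\
     forall U : Rel X, feq (psi (qAut U)) (mu U)) /\
    (forall psi' : Aut X -> O,
       hopf_mor (@wAut X) (@eAut X) w e psi' ->
       (forall U : Rel X, feq (psi' (qAut U)) (mu U)) ->
       forall V : Aut X, feq (psi' V) (psi V)).
Proof.
  intros HG Hmu.
  pose proof Hmu as [mu_hom [mu_w mu_e]].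
  pose proof (quot_lift_hom mu_hom (autrel_identified HG Hmu)) as psi_hom.
  exists (fun V : Aut X => mu V). split; [split |].
  - split; [exact psi_hom | split; [| exact mu_e]].
    intro a. destruct (mu_w a) as [Hw1 Hw2].
    destruct (tmap_comp (qAut (X:=X)) (qAut (X:=X)) (wRel a)
                (hom_sup_map psi_hom) (hom_sup_map psi_hom)) as [Hc1 Hc2].
    split; [exact (le_trans Hw1 Hc2) | exact (le_trans Hc1 Hw2)].
  - intro U. split; apply le_refl.
  - intros psi' _ Hagree V. exact (Hagree V).
Qed.
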